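(* Let $g$ be an $n$-person WTT game form, let $i\in[n]$, and let $j\neq k$ be elements of $X_i$. Then $H_j^{\neq}(k)$ is a constant region or $H_k^{\neq}(j)$ is a constant region (or both are).
   Context: Let $X_1,\dots,X_n$ and $A$ be finite nonempty sets. An $n$-person game form is a map $g: X_1\times\cdots\times X_n\to A$; elements of $X=X_1\times\cdots\times X_n$ are strategy profiles, elements of $A$ are outcomes. For a direction $i\in[n]$ write $X_{-i}=\prod_{t\neq i}X_t$, and for $s\in X_i$, $y\in X_{-i}$ write $(s,y)$ for the profile with $i$-th coordinate $s$ and other coordinates $y$. The hyperplane perpendicular to direction $i$ at $s\in X_i$ is $H_s=\{x\in X: x_i=s\}$. The game form $g$ is weakly totally tight (WTT) if for every $i\in[n]$, all $s\neq s'$ in $X_i$ and all $y\neq y'$ in $X_{-i}$, at least one of $g(s,y)=g(s,y')$, $g(s,y)=g(s',y)$, $g(s',y')=g(s',y)$, $g(s',y')=g(s,y')$ holds. A set $S\subseteq X$ is a constant region if there is $c\in A$ with $g(x)=c$ for all $x\in S$. For a direction $i$ and distinct $j,k\in X_i$, set $H_j^{\neq}(k)=\{(j,y): y\in X_{-i},\ g(j,y)\neq g(k,y)\}$ and $H_j^{=}(k)=H_j\setminus H_j^{\neq}(k)$. *)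

From HB Require Import structures.
From mathcomp Require Import all_boot.
Set Implicit Arguments. Unset Strict Implicit. Unset Printing Implicit Defensive.

Section GameForms.
Variables (n : nat) (X : 'I_n -> finType) (A : finType).

Definition profile := {dffun forall i : 'I_n, X i}.

Definition others (i : 'I_n) := {t : 'I_n | t != i}.

Definition profile_minus (i : 'I_n) :=
  {dffun forall t : others i, X (val t)}.

(* (s, y) : the profile with i-th coordinate s and other coordinates y *)
Definition join (i : 'I_n) (s : X i) (y : profile_minus i) : profile :=
  [ffun t : 'I_n =>
     match eqVneq t i with
     | EqNotNeq e => eq_rect_r X s e
     | NeqNotEq ne => y (exist _ t ne)
     end].

Definition game_form := profile -> A.

Definition WTT (g : game_form) : Prop :=
  forall (i : 'I_n) (s s' : X i) (y y' : profile_minus i),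
    s <> s' -> y <> y' ->
    g (join s y) = g (join s y') \/ g (join s y) = g (join s' y) \/
    g (join s' y') = g (join s' y) \/ g (join s' y') = g (join s y').

Definition constant_region (g : game_form) (S : {set profile}) : Prop :=
  exists c : A, forall x, x \in S -> g x = c.

Definition hyperplane (i : 'I_n) (j : X i) : {set profile} :=
  [set x : profile | x i == j].

Definition H_neq (g : game_form) (i : 'I_n) (j k : X i) : {set profile} :=
  [set x : profile | [exists y : profile_minus i,
     (x == join j y) && (g (join j y) != g (join k y))]].

Definition H_eq (g : game_form) (i : 'I_n) (j k : X i) : {set profile} :=
  hyperplane j :\: H_neq g j k.

End GameForms.

(* Fix i and j <> k, and call y in X_{-i} a disagreement if g(j,y) <> g(k,y).  For two
   disagreements y, y', weak total tightness leaves only g(j,y) = g(j,y') or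
   g(k,y) = g(k,y').  If g(j,.) takes two different values at disagreements y1, y2, then
   g(k,y1) = g(k,y2), and every other disagreement y must share its g(k,.) value with
   y1 or y2, since g(j,y) cannot equal both g(j,y1) and g(j,y2); so g(k,.) is constant
   on the disagreements. *)
From HB Require Import structures.
From mathcomp Require Import all_boot.

Set Implicit Arguments.
Unset Strict Implicit.
Unset Printing Implicit Defensive.

Lemma pairwise_eq_either (T : finType) (B : eqType) (D : {pred T}) (f h : T -> B) :
    {in D &, forall y y', f y = f y' \/ h y = h y'} ->
  {in D &, forall y y', f y = f y'} \/ {in D &, forall y y', h y = h y'}.
Proof.
move=> fVh.
have [f_const | /forall_inPn[y1 y1D /forall_inPn[y2 y2D /eqP f12]]] :=
  boolP [forall (y | y \in D), [forall (y' | y' \in D), f y == f y']].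
  left=> y y' yD y'D; apply/eqP.
  by move/forall_inP/(_ y yD)/forall_inP: f_const; apply.
have h12 : h y1 = h y2 by case: (fVh y1 y2 y1D y2D).
have h_y1 : {in D, forall y, h y = h y1}.
  move=> y yD; case: (fVh y y1 yD y1D) => // fy1.
  case: (fVh y y2 yD y2D) => [fy2 | ->] //.
  by case: f12; rewrite -fy1 fy2.
by right=> y y' yD y'D; rewrite !h_y1.
Qed.

Section GameForms.
Variables (n : nat) (X : 'I_n -> finType) (A : finType).
Implicit Type g : game_form X A.

Lemma WTT_disagreements g i (j k : X i) : WTT g -> j != k ->
  {in [pred y | g (join j y) != g (join k y)] &, forall y y',
    g (join j y) = g (join j y') \/ g (join k y) = g (join k y')}.
Proof.
move=> gWTT /eqP jk y y'; rewrite !inE => /eqP gy /eqP gy'.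
have [<- | /eqP yy'] := eqVneq y y'; first by left.
case: (gWTT i j k y y' jk yy') => [| [| [|]]] E.
- by left.
- by case: gy.
- by right.
- by case: gy'.
Qed.

Lemma H_neqP g i (j k : X i) x :
  reflect (exists2 y, x = join j y & g (join j y) != g (join k y)) (x \in H_neq g j k).
Proof.
rewrite inE; apply: (iffP existsP) => [[y /andP[/eqP-> gy]] | [y -> gy]].
  by exists y.
by exists y; rewrite eqxx.
Qed.

Lemma constant_region_pairwise g (S : {set profile X}) : 0 < #|A| ->
  {in S &, forall x x', g x = g x'} -> constant_region g S.
Proof.
move=> /card_gt0P[a _] gS; have [-> | [x0 x0S]] := set_0Vmem S.
  by exists a => x; rewrite inE.
by exists (g x0) => x xS; apply: gS.
Qed.

End GameForms.

Theorem mainTheorem2 (n : nat) (X : 'I_n -> finType) (A : finType)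
  (hX : forall i, 0 < #|X i|) (hA : 0 < #|A|)
  (g : game_form X A) (hg : WTT g)
  (i : 'I_n) (j k : X i) (hjk : j != k) :
  constant_region g (H_neq g j k) \/ constant_region g (H_neq g k j).
Proof.
have [gj_const | gk_const] := pairwise_eq_either (WTT_disagreements hg hjk).
  left; apply: constant_region_pairwise => // _ _ /H_neqP[y -> gy] /H_neqP[y' -> gy'].
  by apply: gj_const; rewrite inE.
right; apply: constant_region_pairwise => // _ _ /H_neqP[y -> gy] /H_neqP[y' -> gy'].
by apply: gk_const; rewrite inE eq_sym.
Qed.
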